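(* For distinct points $p,q\in M$, the smallest integer $i$ such that the level-$i$ ancestors $p^{(i)}$ and $q^{(i)}$ of $p$ and $q$ in the net tree are joined by a cross edge lies in the interval $$\left[\left\lfloor \log\left(\frac{d(p,q)}{\gamma+4}\right)\right\rfloor,\ \left\lceil \log\left(\frac{d(p,q)}{\gamma-4}\right)\right\rceil\right].$$
   Context: $(M,d)$ is a finite metric space of constant doubling dimension whose minimum interpoint distance is $1$ and whose diameter is $D$; $\log$ is base $2$. Compute nested sets $M=N_0\supseteq N_1\supseteq\cdots\supseteq N_{\log D}$ where $N_i$ is a $2^i$-net of $N_{i-1}$ (distinct points of $N_i$ are at distance $>2^i$, and every point of $N_{i-1}$ is within distance $2^i$ of some point of $N_i$); the top set is a single point. The net tree has one level-$i$ node for each point of $N_i$, whose representative $rep(\cdot)$ is that point; the parent of a level-$i$ node $v$ is a level-$(i+1)$ node $w$ with $d(rep(v),rep(w))\le 2^{i+1}$. The leaves correspond to the points of $M$, and $p^{(i)}$ denotes the level-$i$ ancestor of the leaf $p$. Fix a constant $\gamma>4$. For every pair of level-$i$ nodes $u,w$ with $d(rep(u),rep(w))\le\gamma\cdot 2^i$, a cross edge $(u,w)$ is added.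
   Formalization: For negative i the level-i ancestor $p^{(i)}$ is p itself, so the smallest integer i ranges over all integers up to the top level rather than over levels 0 to log D only. The statement above fails without it. *)

From HB Require Import structures.
From mathcomp Require Import all_boot all_order all_algebra.
From mathcomp Require Import reals exp.
Set Implicit Arguments. Unset Strict Implicit. Unset Printing Implicit Defensive.
Import Order.TTheory GRing.Theory Num.Theory.
Local Open Scope ring_scope.

Section NetTree.
Variables (R : realType) (T : finType) (d : T -> T -> R).

Definition log2 (x : R) : R := ln x / ln 2.

(** [d] is a metric on the finite set [T] (identity of indiscernibles is
    implied by [min_dist_one] below). *)
Definition is_metric : Prop :=
  [/\ forall x, d x x = 0,
      forall x y, d x y = d y x &
      forall x y z, d x z <= d x y + d y z].

Definition min_dist_one : Prop :=
  (forall x y, x != y -> 1 <= d x y) /\ (exists x y, x != y /\ d x y = 1).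

Definition is_net (r : R) (X Y : {set T}) : Prop :=
  [/\ Y \subset X,
      {in Y &, forall y y', y != y' -> r < d y y'} &
      {in X, forall x, exists2 y, y \in Y & d x y <= r}].

Definition is_net_hierarchy (N : nat -> {set T}) (L : nat) : Prop :=
  [/\ N 0%N = [set: T],
      forall i, (1 <= i <= L)%N -> is_net (2 ^+ i) (N i.-1) (N i) &
      #|N L| = 1%N].

(** [par i x] is (the representative of) the parent of the level-[i] node
    with representative [x]: a level-[(i+1)] node within [2^(i+1)]. *)
Definition is_parent_map (N : nat -> {set T}) (L : nat)
  (par : nat -> T -> T) : Prop :=
  forall i x, (i < L)%N -> x \in N i ->
    par i x \in N i.+1 /\ d x (par i x) <= 2 ^+ i.+1.

Fixpoint anc (par : nat -> T -> T) (i : nat) (p : T) : T :=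
  match i with 0%N => p | i'.+1 => par i' (anc par i' p) end.

Definition ancz (par : nat -> T -> T) (i : int) (p : T) : T :=
  match i with Posz n => anc par n p | Negz _ => p end.

Definition cross_edge (gamma : R) (i : int) (u w : T) : Prop :=
  d u w <= gamma * 2 ^ i.

Definition anc_joined (L : nat) (par : nat -> T -> T) (gamma : R)
  (p q : T) (i : int) : Prop :=
  i <= L%:Z /\ cross_edge gamma i (ancz par i p) (ancz par i q).

End NetTree.

From HB Require Import structures.
From mathcomp Require Import all_boot all_order all_algebra.
From mathcomp Require Import reals exp.
From mathcomp Require Import lra.
Set Implicit Arguments. Unset Strict Implicit. Unset Printing Implicit Defensive.
Import Order.TTheory GRing.Theory Num.Theory.
Local Open Scope ring_scope.

(* The ancestor p^(i) lies within 2 * 2^i of p (the parent steps form a geometric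
   series), so d(p^(i), q^(i)) differs from d(p, q) by at most 4 * 2^i.  Hence a
   cross edge at level i forces d(p, q) <= (gamma + 4) 2^i, which gives the lower
   bound, while d(p, q) <= (gamma - 4) 2^i already forces a cross edge at level i,
   so the least such level is at most the least i with that property. *)

Lemma lnXz (R : realType) (a : R) (z : int) : 0 < a -> ln (a ^ z) = z%:~R * ln a.
Proof.
move=> a_gt0; case: z => n.
  by rewrite -exprnP lnXn // mulr_natl.
rewrite NegzE -invr_expz -exprnP lnV ?posrE ?exprn_gt0 //.
by rewrite lnXn // mulrNz mulNr pmulrn mulr_natl.
Qed.

Lemma log2_le_int (R : realType) (x : R) (z : int) :
  0 < x -> (log2 x <= z%:~R) = (x <= 2 ^ z).
Proof.
move=> x_gt0; have ln2_gt0 : 0 < ln (2 : R) by rewrite ln_gt0 // ltr1n.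
by rewrite /log2 ler_pdivrMr // -lnXz // ler_ln // posrE exprz_gt0.
Qed.

Lemma floor_log2_le (R : realType) (x : R) (z : int) :
  0 < x -> x <= 2 ^ z -> Num.floor (log2 x) <= z.
Proof.
by move=> x_gt0; rewrite -log2_le_int // -(ler_int R); apply: le_trans (floor_le _).
Qed.

Lemma le_exprz_ceil_log2 (R : realType) (x : R) :
  0 < x -> x <= 2 ^ Num.ceil (log2 x).
Proof. by move=> x_gt0; rewrite -log2_le_int // ceil_ge. Qed.

Section Ancestors.
Variables (R : realType) (T : finType) (d : T -> T -> R).
Variables (N : nat -> {set T}) (L : nat) (par : nat -> T -> T).
Hypotheses (d_metric : is_metric d) (N_hier : is_net_hierarchy d N L)
  (par_map : is_parent_map d N L par).

Lemma dist_le_via (x y x' y' : T) : d x y <= d x x' + d x' y' + d y' y.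
Proof.
have [_ _ dT] := d_metric; apply: le_trans (dT x x' y) _.
by rewrite -addrA lerD2l dT.
Qed.

Lemma anc_in_net_dist (p : T) (i : nat) : (i <= L)%N ->
  anc par i p \in N i /\ d p (anc par i p) <= 2 ^+ i.+1 - 2.
Proof.
have [d0 _ dT] := d_metric; have [N0 _ _] := N_hier.
elim: i => [|i IH] i_le /=; first by rewrite N0 inE d0 expr1 subrr.
have [anc_in anc_near] := IH (ltnW i_le).
have [par_in par_near] := par_map i_le anc_in.
split=> //; apply: le_trans (dT _ (anc par i p) _) _.
apply: le_trans (lerD anc_near par_near) _.
by rewrite (exprS _ i.+1) addrAC mulr2n mulrDl mul1r.
Qed.

Lemma dist_ancz_le (p : T) (z : int) : z <= L%:Z ->
  d p (ancz par z p) <= 2 * 2 ^ z.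
Proof.
have [d0 _ _] := d_metric.
case: z => [n|n] z_le /=; last by rewrite d0 mulr_ge0 // exprz_ge0.
have [_ anc_near] := anc_in_net_dist p z_le.
by apply: le_trans anc_near _; rewrite -exprnP -exprS gerDl oppr_le0.
Qed.

Lemma dist_le_ancz (p q : T) (z : int) : z <= L%:Z ->
  d p q <= d (ancz par z p) (ancz par z q) + 4 * 2 ^ z.
Proof.
move=> z_le; have [_ dC _] := d_metric.
have := dist_le_via p q (ancz par z p) (ancz par z q).
have := dist_ancz_le p z_le; have := dist_ancz_le q z_le.
rewrite (dC (ancz par z q) q); lra.
Qed.

Lemma ancz_dist_le (p q : T) (z : int) : z <= L%:Z ->
  d (ancz par z p) (ancz par z q) <= d p q + 4 * 2 ^ z.
Proof.
move=> z_le; have [_ dC _] := d_metric.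
have := dist_le_via (ancz par z p) (ancz par z q) p q.
have := dist_ancz_le p z_le; have := dist_ancz_le q z_le.
rewrite (dC (ancz par z p) p); lra.
Qed.

Lemma anc_joined_dist_le (gamma : R) (p q : T) (z : int) :
  anc_joined d L par gamma p q z -> d p q <= (gamma + 4) * 2 ^ z.
Proof.
case=> z_le edge; have := dist_le_ancz p q z_le.
rewrite /cross_edge in edge; lra.
Qed.

Lemma anc_joined_of_dist_le (gamma : R) (p q : T) (z : int) :
  z <= L%:Z -> d p q <= (gamma - 4) * 2 ^ z -> anc_joined d L par gamma p q z.
Proof.
move=> z_le close; split=> //; have := ancz_dist_le p q z_le.
rewrite /cross_edge; lra.
Qed.

End Ancestors.

Theorem lemma16 (R : realType) (T : finType) (d : T -> T -> R)
  (N : nat -> {set T}) (L : nat) (par : nat -> T -> T) (gamma : R)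
  (p q : T) (i0 : int) :
  is_metric d -> min_dist_one d ->
  is_net_hierarchy d N L -> is_parent_map d N L par ->
  4 < gamma -> p != q ->
  anc_joined d L par gamma p q i0 ->
  (forall j : int, j < i0 -> ~ anc_joined d L par gamma p q j) ->
  Num.floor (log2 (d p q / (gamma + 4))) <= i0 <=
  Num.ceil (log2 (d p q / (gamma - 4))).
Proof.
move=> d_metric [min_dist _] N_hier par_map gamma_gt4 pq joined least.
have dpq_gt0 : 0 < d p q by apply: lt_le_trans (min_dist p q pq).
have gammaD_gt0 : 0 < gamma + 4 by lra.
have gammaB_gt0 : 0 < gamma - 4 by lra.
apply/andP; split.
  apply: floor_log2_le; first exact: divr_gt0.
  by rewrite ler_pdivrMr // mulrC (anc_joined_dist_le d_metric N_hier par_map).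
have := le_exprz_ceil_log2 (divr_gt0 dpq_gt0 gammaB_gt0).
rewrite ler_pdivrMr // mulrC; move: (Num.ceil _) => c c_close.
rewrite leNgt; apply/negP => c_lt; apply: (least c c_lt).
apply: (anc_joined_of_dist_le d_metric N_hier par_map _ c_close).
exact: le_trans (ltW c_lt) joined.1.
Qed.
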